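(* Let $\mathcal C:m\to l$ and $\mathcal D:l\to n$ be roPGs and $i\in[m]$. Then $[\![\pi^{\mathcal C;\mathcal D}_i]\!]$ equals: $[\![\pi^{\mathcal C}_i]\!]$ if $[\![\pi^{\mathcal C}_i]\!]\in\{\exists^*,\forall^*\}$; $[\![\pi^{\mathcal D}_j]\!]$ if $[\![\pi^{\mathcal C}_i]\!]=j\in[l]$; $[\![\pi^{\mathcal D}_j]\!]$ if $[\![\pi^{\mathcal C}_i]\!]=(r,j)\in\mathbb R\times[l]$ and $[\![\pi^{\mathcal D}_j]\!]\in\{\exists^*,\forall^*\}$; $(r,k)$ if $[\![\pi^{\mathcal C}_i]\!]=(r,j)\in\mathbb R\times[l]$ and $[\![\pi^{\mathcal D}_j]\!]=k\in[n]$; $(r+r',k)$ if $[\![\pi^{\mathcal C}_i]\!]=(r,j)\in\mathbb R\times[l]$ and $[\![\pi^{\mathcal D}_j]\!]=(r',k)\in\mathbb R\times[n]$.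
   Context: Notation: $[k]=\{1,\dots,k\}$; $X+Y$ disjoint union. An roMPG $\mathcal A:m\to n$ is a tuple $(m,n,Q,E,\rho,w)$ with $Q$ a finite set of positions, entrances $[m]$ and exits $[n]$ (pairwise disjoint with $Q$), edges $E\subseteq([m]+Q)\times([n]+Q)$ such that each entrance has exactly one successor and each exit at most one predecessor, roles $\rho:Q\to\{\exists,\forall\}$, weights $w:Q\to\mathbb R$. An roPG is an roMPG in which every element of $[m]+Q$ has at most one successor. For $\mathcal C:m\to l$, $\mathcal D:l\to n$, the sequential composition $\mathcal C;\mathcal D:m\to n$ has positions $Q^{\mathcal C}+Q^{\mathcal D}$ with inherited roles and weights, and edges: the edges of $\mathcal C$ from $[m]+Q^{\mathcal C}$ to $Q^{\mathcal C}$; the edges of $\mathcal D$ from $Q^{\mathcal D}$ to $[n]+Q^{\mathcal D}$; and $(s,s')$ with $s\in[m]+Q^{\mathcal C}$, $s'\in[n]+Q^{\mathcal D}$ whenever some $i\in[l]$ has $(s,i)\in E^{\mathcal C}$ ($i$ as exit of $\mathcal C$) and $(i,s')\in E^{\mathcal D}$ ($i$ as entrance of $\mathcal D$); no other edges. It is again an roPG. For an roPG $\mathcal C:m\to n$ and entrance $i$, $\pi^{\mathcal C}_i=(s_j)_{j\in J}$ ($J=\{0,\dots,M\}$ or $J=\mathbb N$) is the unique sequence with $s_0=i$, $(s_j,s_{j+1})\in E$ whenever $j,j+1\in J$, and $s_M$ without successor if $J$ is finite. An infinite play satisfies the MP condition if $\liminf_{N\to\infty}\frac1N\sum_{j=1}^Nw(s_j)\ge0$.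 With $T(X)=X+\mathbb R\times X+\{\exists^*,\forall^*\}$, the denotation $[\![\pi]\!]\in T([n])$ of a play $\pi=(s_j)_{j\in J}$ is: $s_1$ if $J=\{0,1\}$ and $s_1$ is an exit; $(\sum_{j=1}^{M-1}w(s_j),s_M)$ if $J=\{0,..,M\}$, $M\ge2$, $s_M$ an exit; $\exists^*$ if $J$ is finite and $s_M$ is a position of role $\forall$, or $J$ is infinite and $\pi$ satisfies MP; $\forall^*$ if $J$ is finite and $s_M$ is a position of role $\exists$, or $J$ is infinite and $\pi$ fails MP. *)

From Stdlib Require Import Reals ClassicalEpsilon.
From Coquelicot Require Import Coquelicot.
From mathcomp Require Import ssreflect ssrfun ssrbool eqtype ssrnat seq choice fintype.

Set Implicit Arguments.
Unset Strict Implicit.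
Unset Printing Implicit Defensive.

Inductive Role := Exists | Forall.

(* roMPG A : m -> n.  Entrances are 'I_m, exits 'I_n, positions the finite
   type [pos A]; these are disjoint thanks to the sum types.
   The edge relation E ⊆ ([m]+Q) × ([n]+Q) is a boolean relation. *)
Record roMPG (m n : nat) := RoMPG {
  pos : finType;
  edge : 'I_m + pos -> 'I_n + pos -> bool;
  role : pos -> Role;
  weight : pos -> R
}.
Arguments pos {m n} _.
Arguments edge {m n} _ _ _.
Arguments role {m n} _ _.
Arguments weight {m n} _ _.

Definition is_roMPG m n (A : roMPG m n) : Prop :=
  (forall i : 'I_m, exists! t, edge A (inl i) t) /\
  (forall (k : 'I_n) s s', edge A s (inl k) -> edge A s' (inl k) -> s = s').

Definition is_roPG m n (A : roMPG m n) : Prop :=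
  is_roMPG A /\ (forall s t t', edge A s t -> edge A s t' -> t = t').

Definition seq_edge m l n (C : roMPG m l) (D : roMPG l n)
  (s : 'I_m + (pos C + pos D)) (s' : 'I_n + (pos C + pos D)) : bool :=
  let sC : option ('I_m + pos C) :=
    match s with inl i => Some (inl i) | inr (inl q) => Some (inr q) | inr (inr _) => None end in
  let sD : option (pos D) :=
    match s with inr (inr q) => Some q | _ => None end in
  let tC : option (pos C) :=
    match s' with inr (inl q) => Some q | _ => None end in
  let tD : option ('I_n + pos D) :=
    match s' with inl k => Some (inl k) | inr (inr q) => Some (inr q) | inr (inl _) => None end in
  match sC, tC with
  | Some a, Some b => edge C a (inr b)
  | _, _ => false
  end
  ||
  match sD, tD with
  | Some a, Some b => edge D (inr a) b
  | _, _ => false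
  end
  ||
  match sC, tD with
  | Some a, Some b => [exists j : 'I_l, edge C a (inl j) && edge D (inl j) b]
  | _, _ => false
  end.

Definition seqcomp m l n (C : roMPG m l) (D : roMPG l n) : roMPG m n :=
  @RoMPG m n (pos C + pos D)%type (@seq_edge m l n C D)
    (fun q => match q with inl a => role C a | inr b => role D b end)
    (fun q => match q with inl a => weight C a | inr b => weight D b end).

Inductive Tres (X : Type) :=
  | TExit of X
  | TPay of R & X
  | TEx
  | TAll.
Arguments TEx {X}.
Arguments TAll {X}.

Section Play.
Variables (m n : nat) (A : roMPG m n) (i : 'I_m).

Definition succ (s : 'I_m + pos A) : option ('I_n + pos A) :=
  [pick t | edge A s t].

(* play_st k = s_{k+1} of the play pi_i = (s_j)_j, or None if the play
   has ended before index k+1. *)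
Fixpoint play_st (k : nat) : option ('I_n + pos A) :=
  match k with
  | 0 => succ (inl i)
  | k'.+1 => match play_st k' with
             | Some (inr q) => succ (inr q)
             | _ => None
             end
  end.

Definition play_w (k : nat) : R :=
  match play_st k with Some (inr q) => weight A q | _ => 0%R end.

Fixpoint psum (f : nat -> R) (N : nat) : R :=
  match N with 0 => 0%R | N'.+1 => (psum f N' + f N')%R end.

Definition play_MP : Prop :=
  Rbar_le (Rbar.Finite 0%R) (LimInf_seq (fun N => (/ INR N * psum play_w N)%R)).

Definition denot : Tres 'I_n :=
  match excluded_middle_informative (exists k e, play_st k = Some (inl e)) with
  | left H =>
      (* finite play ending at exit s_M = e, M = k+1 *)
      let (k, H1) := constructive_indefinite_description _ H in
      let (e, _) := constructive_indefinite_description _ H1 in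
      match k with
      | 0 => TExit e
      | _ => TPay (psum play_w k) e      (* sum_{j=1}^{M-1} w(s_j) *)
      end
  | right _ =>
      match excluded_middle_informative
              (exists k q, play_st k = Some (inr q) /\ play_st k.+1 = None) with
      | left H =>
          let (k, H1) := constructive_indefinite_description _ H in
          let (q, _) := constructive_indefinite_description _ H1 in
          match role A q with Forall => TEx | Exists => TAll end
      | right _ =>
          if excluded_middle_informative play_MP then TEx else TAll
      end
  end.

End Play.

From Pilot Require Import Defs.
From Stdlib Require Import Reals Lra Lia ClassicalEpsilon FunctionalExtensionality.
From Coquelicot Require Import Coquelicot.
From mathcomp Require Import ssreflect ssrfun ssrbool eqtype ssrnat seq fintype.

Set Implicit Arguments.
Unset Strict Implicit.
Unset Printing Implicit Defensive.

(* The play of [C;D] from [i] copies the play of [C] (positions tagged [inl]) until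
   [C] reaches an exit [j] after [K] steps; from then on it copies the play of [D]
   from [j] (positions tagged [inr]), shifted by [K].  The only analytic point is that a finite prefix
   does not affect the mean-payoff condition: for bounded weights, the Cesàro means
   of a sequence and of its [K]-shift differ by O(1/N), so their liminfs agree. *)

Local Open Scope R_scope.

Lemma psum_add (f : nat -> R) (K t : nat) :
  psum f (K + t) = psum f K + psum (fun k => f (K + k)%N) t.
Proof. by elim: t => [|t IH] /=; rewrite ?addn0 ?addnS /= ?IH; ring. Qed.

Lemma eq_psum (f g : nat -> R) (N : nat) :
  (forall k, (k < N)%N -> f k = g k) -> psum f N = psum g N.
Proof.
elim: N => //= N IH fg; rewrite fg // IH // => k lt_kN.
by apply: fg; apply: ltnW.
Qed.

Lemma psum_abs_le (g : nat -> R) (B : R) (N : nat) :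
  (forall t, Rabs (g t) <= B) -> Rabs (psum g N) <= B * INR N.
Proof.
move=> gB; elim: N => [|N IH]; first by rewrite /= Rabs_R0; lra.
rewrite S_INR /=; have := Rabs_triang (psum g N) (g N); have := gB N; lra.
Qed.

Lemma is_LimInf_seq_null_diff (u v : nat -> R) (l : Rbar) :
  is_lim_seq (fun n => v n - u n) 0 -> is_LimInf_seq u l -> is_LimInf_seq v l.
Proof.
move=> /is_lim_seq_spec uv.
have close eps : 0 < eps -> exists N, forall n, (N <= n)%coq_nat -> Rabs (v n - u n) < eps.
  move=> eps0; have [N HN] := uv (mkposreal _ eps0).
  by exists N => n /HN; rewrite Rminus_0_r.
case: l => [l||] /= lim_u.
- move=> eps; have [|N0 HN0] := close (eps / 2); first by case: eps => /= e; lra.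
  have [inf_u [N1 HN1]] := lim_u (pos_div_2 eps).
  split.
  + move=> N; have [n [Nn un]] := inf_u (Nat.max N N0).
    exists n; split; first lia.
    have := Rabs_def2 _ _ (HN0 n ltac:(lia)); simpl in un; lra.
  + exists (Nat.max N0 N1) => n Nn.
    have := Rabs_def2 _ _ (HN0 n ltac:(lia)); have := HN1 n ltac:(lia); simpl; lra.
- move=> M; have [N0 HN0] := close 1 Rlt_0_1; have [N1 HN1] := lim_u (M + 1).
  exists (Nat.max N0 N1) => n Nn.
  have := Rabs_def2 _ _ (HN0 n ltac:(lia)); have := HN1 n ltac:(lia); lra.
- move=> M N; have [N0 HN0] := close 1 Rlt_0_1.
  have [n [Nn un]] := lim_u (M - 1) (Nat.max N N0).
  exists n; split; first lia.
  have := Rabs_def2 _ _ (HN0 n ltac:(lia)); lra.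
Qed.

Definition mean (f : nat -> R) (N : nat) : R := / INR N * psum f N.

Section MeanShift.
Variables (f g : nat -> R) (K : nat) (B : R).
Hypotheses (f_shift : forall t, f (K + t)%N = g t) (g_bounded : forall t, Rabs (g t) <= B).

Lemma mean_shift_le (n : nat) : (0 < n)%N ->
  Rabs (mean g n - mean f (n + K)) <= (Rabs (psum f K) + B * INR K) / INR n.
Proof.
move=> n0; have T0 : 0 < INR n by apply: lt_0_INR; apply/ltP.
have k0 := pos_INR K.
rewrite /mean addnC psum_add (eq_psum (fun t _ => f_shift t)) plus_INR.
set c := psum f K; set G := psum g n; set T := INR n in T0 *; set k := INR K in k0 *.
have GB : Rabs G <= B * T by exact: psum_abs_le.
have -> : / T * G - / (k + T) * (c + G) = (G * k - c * T) / (T * (T + k)).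
  by field; split; lra.
have num : Rabs (G * k - c * T) <= T * (Rabs c + B * k).
  rewrite /Rminus; apply: Rle_trans (Rabs_triang _ _) _.
  rewrite Rabs_Ropp !Rabs_mult (Rabs_pos_eq k) // (Rabs_pos_eq T); last lra.
  nra.
rewrite Rabs_div; last nra.
rewrite (Rabs_pos_eq (T * (T + k))); last nra.
apply/Rle_div_l; first nra.
apply: Rle_trans num _; rewrite /Rdiv.
have M0 : 0 <= Rabs c + B * k by have := Rabs_pos G; have := Rabs_pos c; nra.
have -> : (Rabs c + B * k) * / T * (T * (T + k)) = (Rabs c + B * k) * (T + k).
  by field; lra.
nra.
Qed.

Lemma LimInf_mean_shift : LimInf_seq (mean f) = LimInf_seq (mean g).
Proof.
have [l lim_f] := ex_LimInf_seq (mean f).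
rewrite (is_LimInf_seq_unique _ _ lim_f); symmetry; apply: is_LimInf_seq_unique.
apply: (is_LimInf_seq_null_diff _ (proj1 (is_LimInf_seq_ind_k _ K l) lim_f)).
apply/is_lim_seq_abs_0.
set M := Rabs (psum f K) + B * INR K.
apply: (is_lim_seq_le_le_loc _ _ (fun n => M * / INR n)).
- exists 1%N => n /leP n0; split; [exact: Rabs_pos | exact: mean_shift_le].
- exact: is_lim_seq_const.
- have -> : Rbar.Finite 0 = Rbar_mult M (Rbar_inv p_infty) by rewrite /= Rmult_0_r.
  apply/is_lim_seq_scal_l/is_lim_seq_inv; [exact: is_lim_seq_INR | by []].
Qed.

End MeanShift.

Lemma finite_bounded (T : finType) (g : T -> R) : exists B, forall x, g x <= B.
Proof.
suff [B gB] : exists B, forall x, x \in enum T -> g x <= B.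
  by exists B => x; apply: gB; rewrite mem_enum.
elim: (enum T) => [|y s [B gB]]; first by exists 0.
exists (Rmax (g y) B) => x; rewrite inE => /orP [/eqP -> | /gB xB].
  exact: Rmax_l.
exact: Rle_trans xB (Rmax_r _ _).
Qed.

Lemma pick_eq_Some (T : finType) (P : pred T) (x : option T) :
  (forall t, P t = (x == Some t)) -> [pick t | P t] = x.
Proof.
move=> Px; case: pickP => [t | noP].
  by rewrite Px => /eqP.
by case: x Px => // x Px; move: (noP x); rewrite Px eqxx.
Qed.

Definition map_pos (n : nat) (P Q : Type) (f : P -> Q) (x : 'I_n + P) : 'I_n + Q :=
  match x with inl k => inl k | inr q => inr (f q) end.

Definition add_payoff (X : Type) (r : R) (x : Tres X) : Tres X :=
  match x with
  | TExit k => TPay r k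
  | TPay r' k => TPay (r + r') k
  | TEx => TEx
  | TAll => TAll
  end.

Section Play.
Variables (m n : nat) (A : roMPG m n) (i : 'I_m).
Local Notation st := (play_st A i).

Lemma play_st_pred k : st k.+1 <> None -> exists q, st k = Some (inr q).
Proof. by rewrite /=; case: (st k) => [[e|q]|] //; exists q. Qed.

Lemma play_st_le k k' : (k' <= k)%N -> st k <> None -> st k' <> None.
Proof.
elim: k => [|k IH]; first by rewrite leqn0 => /eqP ->.
rewrite leq_eqVlt => /orP [/eqP -> // | lt_k'k] /play_st_pred [q stk].
by apply: IH => //; rewrite stk.
Qed.

Lemma play_st_lt k k' : (k' < k)%N -> st k <> None -> exists q, st k' = Some (inr q).
Proof. by move=> lt_k'k /(play_st_le lt_k'k) /play_st_pred. Qed.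

Lemma play_end_le k k' : st k.+1 = None -> st k' <> None -> (k' <= k)%N.
Proof.
move=> end_k def_k'; rewrite leqNgt; apply/negP => lt_kk'.
exact: (play_st_le lt_kk' def_k').
Qed.

Lemma play_exit_end k e : st k = Some (inl e) -> st k.+1 = None.
Proof. by rewrite /= => ->. Qed.

Lemma play_last_uniq k k' : st k <> None -> st k.+1 = None ->
  st k' <> None -> st k'.+1 = None -> k = k'.
Proof.
move=> def_k end_k def_k' end_k'.
by apply/eqP; rewrite eqn_leq (play_end_le end_k' def_k) (play_end_le end_k def_k').
Qed.

Lemma play_exit_uniq k k' e e' :
  st k = Some (inl e) -> st k' = Some (inl e') -> k = k' /\ e = e'.
Proof.
move=> ste ste'.
have kk' : k = k'.
  by apply: (play_last_uniq _ (play_exit_end ste) _ (play_exit_end ste')); rewrite ?ste ?ste'.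
by move: ste'; rewrite -kk' ste => -[].
Qed.

Lemma denot_exit k e : st k = Some (inl e) ->
  denot A i = if k is 0 then TExit e else TPay (psum (play_w A i) k) e.
Proof.
move=> ste; rewrite /denot; case: excluded_middle_informative => [ex_exit | []]; last by eauto.
case: (constructive_indefinite_description _ ex_exit) => k' ex_e'.
case: (constructive_indefinite_description _ ex_e') => e' ste'.
by have [-> ->] := play_exit_uniq ste' ste.
Qed.

Lemma denot_dead k q : st k = Some (inr q) -> st k.+1 = None ->
  denot A i = match role A q with Defs.Forall => TEx | Defs.Exists => TAll end.
Proof.
move=> stq end_k; rewrite /denot.
case: excluded_middle_informative => [[k' [e ste]] | _].
  exfalso; have kk' : k' = k.
    by apply: (play_last_uniq _ (play_exit_end ste) _ end_k); rewrite ?ste ?stq.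
  by move: ste; rewrite kk' stq.
case: excluded_middle_informative => [ex_dead | []]; last by eauto.
case: (constructive_indefinite_description _ ex_dead) => k' ex_q'.
case: (constructive_indefinite_description _ ex_q') => q' [stq' end_k'].
have kk' : k' = k by apply: (play_last_uniq _ end_k' _ end_k); rewrite ?stq ?stq'.
by move: stq'; rewrite kk' stq => -[->].
Qed.

Lemma denot_infinite : (forall k, exists q, st k = Some (inr q)) ->
  denot A i = if excluded_middle_informative (play_MP A i) then TEx else TAll.
Proof.
move=> inf; rewrite /denot.
case: excluded_middle_informative => [[k [e ste]] | _].
  by exfalso; have [q] := inf k; rewrite ste.
case: excluded_middle_informative => [ex_dead | //]; exfalso.
by case: ex_dead => k [q [_ end_k]]; have [q'] := inf k.+1; rewrite end_k.
Qed.

Lemma denot_no_exit : ~ (exists k e, st k = Some (inl e)) ->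
  denot A i = TEx \/ denot A i = TAll.
Proof.
move=> no_exit; rewrite /denot; case: excluded_middle_informative => // _.
case: excluded_middle_informative => [ex_dead | _].
  case: (constructive_indefinite_description _ ex_dead) => k ex_q.
  by case: (constructive_indefinite_description _ ex_q) => q _; case: (role A q); auto.
by case: excluded_middle_informative; auto.
Qed.

Lemma play_cases : st 0 <> None ->
  [\/ exists k e, st k = Some (inl e),
      exists k q, st k = Some (inr q) /\ st k.+1 = None
    | forall k, exists q, st k = Some (inr q)].
Proof.
move=> st0.
have [ex_exit | no_exit] := classic (exists k e, st k = Some (inl e)); first exact: Or31.
have [ex_dead | no_dead] := classic (exists k q, st k = Some (inr q) /\ st k.+1 = None).
  exact: Or32.
apply: Or33; elim=> [|k [q stq]].
  case E: (st 0) st0 => [[e|q]|] // _; last by exists q.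
  by case: no_exit; exists 0%N, e.
case E: (st k.+1) => [[e|q']|].
- by case: no_exit; exists k.+1, e.
- by exists q'.
- by case: no_dead; exists k, q.
Qed.

Lemma play_w_bounded : exists B, forall t, Rabs (play_w A i t) <= B.
Proof.
have [B wB] := finite_bounded (fun q => Rabs (weight A q)).
exists (Rmax 0 B) => t; rewrite /play_w.
case: (st t) => [[e|q]|]; rewrite ?Rabs_R0; try exact: Rmax_l.
exact: Rle_trans (wB q) (Rmax_r _ _).
Qed.

End Play.

Section PlayShift.
Variables (m m' n : nat) (A : roMPG m n) (B : roMPG m' n) (i : 'I_m) (i' : 'I_m').
Variables (f : Defs.pos A -> Defs.pos B) (K : nat).
Hypotheses (f_role : forall q, role B (f q) = role A q)
  (f_weight : forall q, weight B (f q) = weight A q)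
  (play_shift : forall t, play_st B i' (K + t) = omap (map_pos f) (play_st A i t)).

Lemma play_w_shift t : play_w B i' (K + t) = play_w A i t.
Proof.
by rewrite /play_w play_shift; case: (play_st A i t) => [[e|q]|] /=; rewrite ?f_weight.
Qed.

Lemma psum_shift t :
  psum (play_w B i') (K + t) = psum (play_w B i') K + psum (play_w A i) t.
Proof. by rewrite psum_add (eq_psum (fun t _ => play_w_shift t)). Qed.

Lemma play_MP_shift : play_MP B i' = play_MP A i.
Proof.
have [W wW] := play_w_bounded A i.
by rewrite /play_MP -!/(mean _) (LimInf_mean_shift play_w_shift wW).
Qed.

Hypothesis play_start : play_st A i 0 <> None.

Lemma play_infinite_shift : (forall t, exists q, play_st A i t = Some (inr q)) ->
  forall k, exists q, play_st B i' k = Some (inr q).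
Proof.
move=> inf k; case: (ltnP k K) => [lt_kK | le_Kk].
  by apply: (play_st_lt lt_kK); rewrite -[K]addn0 play_shift; case: (play_st A i 0) play_start.
have [q stq] := inf (k - K)%N.
by exists (f q); rewrite -(subnKC le_Kk) play_shift stq.
Qed.

Lemma denot_shift :
  denot B i' = if K is 0 then denot A i else add_payoff (psum (play_w B i') K) (denot A i).
Proof.
case: (play_cases play_start) => [[t [e ste]] | [t [q [stq end_t]]] | inf].
- have steB : play_st B i' (K + t) = Some (inl e) by rewrite play_shift ste.
  rewrite (denot_exit steB) (denot_exit ste) psum_shift.
  by case: K {steB} => [|K'] /=; case: t {ste} => [|t] //=; rewrite ?Rplus_0_l ?Rplus_0_r.
- have stqB : play_st B i' (K + t) = Some (inr (f q)) by rewrite play_shift stq.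
  have endB : play_st B i' (K + t).+1 = None by rewrite -addnS play_shift end_t.
  rewrite (denot_dead stqB endB) (denot_dead stq end_t) f_role.
  by case: K {stqB endB} => [|K']; case: (role A q).
- rewrite (denot_infinite (play_infinite_shift inf)) (denot_infinite inf) play_MP_shift.
  by case: K => [|K']; case: excluded_middle_informative.
Qed.

End PlayShift.

Lemma succ_entrance m n (A : roMPG m n) (j : 'I_m) :
  is_roMPG A -> @succ _ _ A (inl j) <> None.
Proof.
case=> entr _; have [t [jt _]] := entr j.
by rewrite /succ; case: pickP => // /(_ t); rewrite jt.
Qed.

Lemma edge_succ m n (A : roMPG m n) s t :
  is_roPG A -> edge A s t = (@succ _ _ A s == Some t).
Proof.
case=> _ uniq_succ; rewrite /succ; case: pickP => [t0 st0 | no_succ].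
  by apply/idP/eqP => [st | [<-]] //; rewrite (uniq_succ _ _ _ st0 st).
by rewrite no_succ.
Qed.

Section Seqcomp.
Variables (m l n : nat) (C : roMPG m l) (D : roMPG l n).
Hypotheses (HC : is_roPG C) (HD : is_roPG D).
Local Notation S := (seqcomp C D).

Lemma exists_edge_through a b :
  [exists j, edge C a (inl j) && edge D (inl j) b] =
  match @succ _ _ C a with Some (inl j) => edge D (inl j) b | _ => false end.
Proof.
case E: (@succ _ _ C a) => [[j|q]|].
- apply/existsP/idP => [[j' /andP [Caj' Dj'b]] | Djb].
    by move: Caj'; rewrite (edge_succ _ _ HC) E => /eqP [->].
  by exists j; rewrite Djb andbT (edge_succ _ _ HC) E.
- by apply/existsP => -[j' /andP [+ _]]; rewrite (edge_succ _ _ HC) E.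
- by apply/existsP => -[j' /andP [+ _]]; rewrite (edge_succ _ _ HC) E.
Qed.

Lemma succ_seqcomp_C (s : 'I_m + Defs.pos C) :
  @succ _ _ S (map_pos inl s) =
  match @succ _ _ C s with
  | Some (inr q) => Some (inr (inl q))
  | Some (inl j) => omap (map_pos inr) (@succ _ _ D (inl j))
  | None => None
  end.
Proof.
rewrite {1}/succ; apply: pick_eq_Some => t.
case: s => [i0|q]; case: t => [k|[q'|q']];
  rewrite /= /seq_edge /= ?exists_edge_through ?orbF /= ?(edge_succ _ _ HC);
  case: (@succ _ _ C _) => [[j|q0]|] //=;
  rewrite ?(edge_succ _ _ HD); try case: (@succ _ _ D _) => [[k0|q1]|] //=.
all: by apply/eqP/eqP => [-[->] | -[->]].
Qed.

Lemma succ_seqcomp_D (q : Defs.pos D) :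
  @succ _ _ S (inr (inr q)) = omap (map_pos inr) (@succ _ _ D (inr q)).
Proof.
rewrite {1}/succ; apply: pick_eq_Some => t.
case: t => [k|[q'|q']]; rewrite /= /seq_edge /= ?orbF /= ?(edge_succ _ _ HD);
  case: (@succ _ _ D _) => [[k0|q1]|] //=.
all: by apply/eqP/eqP => [-[->] | -[->]].
Qed.

Variable i : 'I_m.

Lemma seqcomp_play_pos k q :
  play_st C i k = Some (inr q) -> play_st S i k = Some (inr (inl q)).
Proof.
elim: k q => [|k IH] q /=.
  by move=> Ciq; have := succ_seqcomp_C (inl i); rewrite /= Ciq.
case E: (play_st C i k) => [[j|q0]|] // Cq; rewrite (IH _ E).
by have := succ_seqcomp_C (inr q0); rewrite /= Cq.
Qed.

Lemma seqcomp_play_end k q : play_st C i k = Some (inr q) -> play_st C i k.+1 = None ->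
  play_st S i k.+1 = None.
Proof.
move=> Cq /=; rewrite Cq (seqcomp_play_pos Cq) => Cend.
by rewrite (succ_seqcomp_C (inr q)) Cend.
Qed.

Lemma seqcomp_play_w_pos k q : play_st C i k = Some (inr q) -> play_w S i k = play_w C i k.
Proof. by move=> Cq; rewrite /play_w Cq (seqcomp_play_pos Cq). Qed.

Lemma seqcomp_play_after_exit K j : play_st C i K = Some (inl j) ->
  forall t, play_st S i (K + t) = omap (map_pos inr) (play_st D j t).
Proof.
move=> CKj; elim=> [|t IH].
  rewrite addn0; case: K CKj => [|K] /=.
    by move=> Cij; rewrite (succ_seqcomp_C (inl i)) Cij.
  case E: (play_st C i K) => [[j0|q]|] // Cj; rewrite (seqcomp_play_pos E).
  by rewrite (succ_seqcomp_C (inr q)) Cj.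
rewrite addnS /= IH; case: (play_st D j t) => [[k|q]|] //=.
exact: succ_seqcomp_D.
Qed.

Lemma seqcomp_psum_before_exit K j : play_st C i K = Some (inl j) ->
  psum (play_w S i) K = psum (play_w C i) K.
Proof.
move=> CKj; apply: eq_psum => k lt_kK.
have [q Cq] := play_st_lt lt_kK (ltac:(by rewrite CKj) : play_st C i K <> None).
exact: seqcomp_play_w_pos Cq.
Qed.

Lemma denot_seqcomp_no_exit : ~ (exists k j, play_st C i k = Some (inl j)) ->
  denot S i = if denot C i is TEx then TEx else TAll.
Proof.
move=> no_exit.
case: (play_cases (succ_entrance (j := i) HC.1)) => [ex_exit | [k [q [Cq Cend]]] | inf].
- by case: no_exit.
- rewrite (denot_dead Cq Cend) (denot_dead (seqcomp_play_pos Cq) (seqcomp_play_end Cq Cend)).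
  by rewrite /=; case: (role C q).
- have infS k : exists q, play_st S i k = Some (inr q).
    by have [q Cq] := inf k; exists (inl q); apply: seqcomp_play_pos.
  have wS : play_w S i = play_w C i.
    apply: functional_extensionality => k.
    by have [q Cq] := inf k; apply: seqcomp_play_w_pos Cq.
  rewrite (denot_infinite infS) (denot_infinite inf) /play_MP wS.
  by case: excluded_middle_informative.
Qed.

End Seqcomp.

Theorem proposition3p2 (m l n : nat) (C : roMPG m l) (D : roMPG l n) (i : 'I_m) :
  is_roPG C -> is_roPG D ->
  denot (seqcomp C D) i =
  match denot C i with
  | TEx => TEx
  | TAll => TAll
  | TExit j => denot D j
  | TPay r j =>
      match denot D j with
      | TEx => TEx
      | TAll => TAll
      | TExit k => TPay r k
      | TPay r' k => TPay (r + r')%R k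
      end
  end.
Proof.
move=> HC HD.
have [[K [j CKj]] | no_exit] := classic (exists K j, play_st C i K = Some (inl j)).
- have SD := seqcomp_play_after_exit HC HD CKj.
  rewrite (denot_exit CKj) (denot_shift _ _ SD (succ_entrance (j := j) HD.1)) //.
  case: K CKj {SD} => [|K] CKj //.
  by rewrite (seqcomp_psum_before_exit HC HD CKj); case: (denot D j).
- rewrite (denot_seqcomp_no_exit HC HD no_exit).
  by case: (denot_no_exit no_exit) => ->.
Qed.
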